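(* Let $Q\in\mathbb{R}^{n\times n}$ be symmetric positive definite and let $\mathcal{E}=\{x\in\mathbb{R}^n : x^TQx\le 1\}$. Let $f_d:\mathbb{R}^n\to\mathbb{R}^n$ be continuously differentiable and consider the discrete system $x_{k+1}=f_d(x_k)$. Then $\mathcal{E}$ is an invariant set for this discrete system if and only if there exists $\beta\ge 0$ such that $$\beta x^TQx-f_d(x)^TQf_d(x)\ge \beta-1\quad\text{for all } x\in\mathcal{E}.$$
   Context: A set $\mathcal{S}\subseteq\mathbb{R}^n$ is an invariant set for the discrete system $x_{k+1}=f_d(x_k)$ if $x_k\in\mathcal{S}$ implies $x_{k+1}\in\mathcal{S}$ for all $k\in\mathbb{N}$. *)

From HB Require Import structures.
From mathcomp Require Import all_boot all_order all_algebra.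
From mathcomp Require Import all_classical all_reals all_analysis.
Set Implicit Arguments. Unset Strict Implicit. Unset Printing Implicit Defensive.
Import Order.TTheory GRing.Theory Num.Theory.
Import numFieldNormedType.Exports.
Local Open Scope ring_scope.

(* quadratic form x^T Q x, with x represented as a row vector: x Q x^T *)
Definition qform (R : realType) (n : nat) (Q : 'M[R]_n) (x : 'rV[R]_n) : R :=
  (x *m Q *m x^T) 0 0.

Definition sym_posdef (R : realType) (n : nat) (Q : 'M[R]_n) : Prop :=
  Q^T = Q /\ (forall x : 'rV[R]_n, x != 0 -> 0 < qform Q x).

Definition ellipsoid (R : realType) (n : nat) (Q : 'M[R]_n) : set 'rV[R]_n :=
  fun x => qform Q x <= 1.

Definition C1 (R : realType) (n : nat) (f : 'rV[R]_n -> 'rV[R]_n) : Prop :=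
  (forall x, differentiable f x) /\ continuous (jacobian f).

Definition invariant_set (T : Type) (f : T -> T) (S : set T) : Prop :=
  forall (x0 : T) (k : nat), S (iter k f x0) -> S (iter k.+1 f x0).

(* Invariance of S under x_{k+1} = f x_k only asks f to map S into S, since
   x_0 = x, k = 0 is an admissible trajectory. For the ellipsoid this is the
   multiplier inequality with beta = 0; conversely, for any beta >= 0 the term
   beta (x^T Q x - 1) is nonpositive on the ellipsoid, so the inequality forces
   f(x)^T Q f(x) <= 1 there. *)
From HB Require Import structures.
From mathcomp Require Import all_boot all_order all_algebra.
From mathcomp Require Import all_classical all_reals all_analysis.
From mathcomp Require Import lra.
Import Order.TTheory GRing.Theory Num.Theory.
Local Open Scope ring_scope.

Lemma invariant_setP (T : Type) (f : T -> T) (S : set T) :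
  invariant_set f S <-> (forall x, S x -> S (f x)).
Proof.
split=> [fS x Sx | fS x0 k Sxk]; first exact: (fS x 0%N).
by rewrite iterS; apply: fS.
Qed.

Lemma sublevel1_implyP (T : Type) (R : realDomainType) (g h : T -> R) :
  (forall x, g x <= 1 -> h x <= 1) <->
  exists beta : R, 0 <= beta /\
    forall x, g x <= 1 -> beta * g x - h x >= beta - 1.
Proof.
split=> [gh | [beta [beta_ge0 mult]] x gx_le1].
  by exists 0; split=> // x /gh; rewrite mul0r sub0r add0r lerN2.
have := mult x gx_le1.
have : beta * (g x - 1) <= 0 by rewrite mulr_ge0_le0 // subr_le0.
lra.
Qed.

Theorem theorem13 (R : realType) (n : nat) (Q : 'M[R]_n)
  (f : 'rV[R]_n -> 'rV[R]_n) :
  sym_posdef Q -> C1 f ->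
  (invariant_set f (ellipsoid Q) <->
   exists beta : R, 0 <= beta /\
     forall x, ellipsoid Q x -> beta * qform Q x - qform Q (f x) >= beta - 1).
Proof.
move=> _ _; rewrite invariant_setP.
exact: (@sublevel1_implyP _ R (qform Q) (fun x => qform Q (f x))).
Qed.
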